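(* Let $(\mathcal V,\{C_n\}_n,e)$ be an operator system and let $p\in\mathcal V$ satisfy $0\le p\le e$. Then $\{C(p_n)\}_n$ is a (not necessarily proper) matrix ordering on $\mathcal V$, and $p$ is an Archimedean matrix order unit for $(\mathcal V,\{C(p_n)\}_n)$.
   Context: $e_n=I_n\otimes e$, $p_n=I_n\otimes p$, and $C(p_n)=\{x\in M_n(\mathcal V): x=x^*,\ \forall\epsilon>0\ \exists t>0 \text{ such that } x+\epsilon p_n+t(e_n-p_n)\in C_n\}$. A (not necessarily proper) matrix ordering is a sequence of cones $D_n\subseteq M_n(\mathcal V)_h$ with $\alpha^*D_n\alpha\subseteq D_m$ for all $\alpha\in M_{n,m}$. An element $u$ is an Archimedean matrix order unit for $\{D_n\}$ if for every hermitian $x\in M_n(\mathcal V)$ there is $r>0$ with $r u_n-x\in D_n$ (where $u_n=I_n\otimes u$), and $x+\epsilon u_n\in D_n$ for all $\epsilon>0$ implies $x\in D_n$. *)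

(* Scalars: the complex numbers R[i] over a real field R : realType
   (R[i] = complex R from mathcomp-real-closed; for R = the reals this is ℂ). *)
From mathcomp Require Import all_boot all_order all_algebra.
From mathcomp Require Import reals complex.
Set Implicit Arguments. Unset Strict Implicit. Unset Printing Implicit Defensive.
Import Order.TTheory GRing.Theory Num.Theory.
Local Open Scope ring_scope.
Local Open Scope complex_scope.

Section OpSys.
Variable R : realType.
Local Notation C := (R[i]).
Variable V : lmodType C.
Variable star : V -> V.

Definition is_involution : Prop :=
  involutive star /\
  (forall (a : C) (u v : V), star (a *: u + v) = conjc a *: star u + star v).

Definition mxstar (n : nat) (x : 'M[V]_(n)) : 'M[V]_(n) :=
  \matrix_(i < n, j < n) star (x j i).

Definition mx_hermitian (n : nat) (x : 'M[V]_(n)) : Prop := mxstar x = x.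

(* alpha^* x alpha for alpha in M_{n,m}(C), x in M_n(V) *)
Definition mx_congr (n m : nat) (alpha : 'M[C]_(n, m)) (x : 'M[V]_(n)) : 'M[V]_m :=
  \matrix_(k < m, l < m)
     \sum_(i < n) \sum_(j < n) (conjc (alpha i k) * alpha j l) *: x i j.

Definition ampl (n : nat) (v : V) : 'M[V]_(n) :=
  \matrix_(i < n, j < n) (if i == j then v else 0).

Definition mxscale (n : nat) (a : C) (x : 'M[V]_(n)) : 'M[V]_(n) :=
  \matrix_(i < n, j < n) (a *: x i j).

Definition is_cone_h (n : nat) (D : 'M[V]_(n) -> Prop) : Prop :=
  (forall x, D x -> mx_hermitian x) /\
  D 0 /\
  (forall x y, D x -> D y -> D (x + y)) /\
  (forall (t : R) x, 0 <= t -> D x -> D (mxscale (t%:C) x)).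

Definition matrix_ordering (D : forall n : nat, 'M[V]_(n) -> Prop) : Prop :=
  (forall n, is_cone_h (D n)) /\
  (forall (n m : nat) (alpha : 'M[C]_(n, m)) (x : 'M[V]_(n)),
      D n x -> D m (mx_congr alpha x)).

Definition proper_ordering (D : forall n : nat, 'M[V]_(n) -> Prop) : Prop :=
  forall n (x : 'M[V]_(n)), D n x -> D n (- x) -> x = 0.

Definition archimedean_unit (D : forall n : nat, 'M[V]_(n) -> Prop) (u : V) : Prop :=
  (forall n (x : 'M[V]_(n)), mx_hermitian x ->
      exists r : R, 0 < r /\ D n (mxscale (r%:C) (ampl n u) - x)) /\
  (forall n (x : 'M[V]_(n)),
      (forall eps : R, 0 < eps -> D n (x + mxscale (eps%:C) (ampl n u))) -> D n x).

Definition operator_system (Cn : forall n : nat, 'M[V]_(n) -> Prop) (e : V) : Prop :=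
  is_involution /\ matrix_ordering Cn /\ proper_ordering Cn /\ archimedean_unit Cn e.

Definition Cp (Cn : forall n : nat, 'M[V]_(n) -> Prop) (e p : V) (n : nat)
    (x : 'M[V]_(n)) : Prop :=
  mx_hermitian x /\
  forall eps : R, 0 < eps -> exists t : R, 0 < t /\
    Cn n (x + mxscale (eps%:C) (ampl n p) + mxscale (t%:C) (ampl n e - ampl n p)).

End OpSys.

(* For q >= 0, the map A |-> A (x) q sends every Gram matrix alpha^* alpha into C_m,
   since alpha^* (I_n (x) q) alpha = (alpha^* alpha) (x) q.  By Lagrange's identity
   |g|^2 I - g^* g is a sum of Gram matrices, so summing over the rows of alpha gives
   alpha^* (I_n (x) q) alpha <= (sum |alpha_ij|^2) (I_m (x) q).  Applied to q = p and
   q = e - p, this bound absorbs the error terms eps p_n and t (e_n - p_n) after a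
   congruence, which makes {C(p_n)} compatible.  The cone axioms follow by splitting eps,
   and p is an order unit because r p_n - x + eps p_n + r (e_n - p_n) = (r e_n - x) + eps p_n. *)

From mathcomp Require Import all_boot all_order all_algebra.
From mathcomp Require Import reals complex.
Import Order.TTheory GRing.Theory Num.Theory.
Local Open Scope ring_scope.
Local Open Scope complex_scope.

Set Implicit Arguments. Unset Strict Implicit. Unset Printing Implicit Defensive.

Section MatricesOverStarSpace.
Variables (R : realType) (V : lmodType R[i]) (star : V -> V).
Local Notation C := R[i].

Section Involution.
Hypothesis star_inv : is_involution star.

Lemma starD u v : star (u + v) = star u + star v.
Proof. by case: star_inv => _ starZD; rewrite -[u in LHS]scale1r starZD rmorph1 scale1r. Qed.

Lemma star0 : star 0 = 0.
Proof. by apply: (addIr (star 0)); rewrite -starD !add0r. Qed.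

Lemma starZ a u : star (a *: u) = conjc a *: star u.
Proof. by case: star_inv => _ starZD; rewrite -[a *: u]addr0 starZD star0 addr0. Qed.

Lemma starN u : star (- u) = - star u.
Proof. by rewrite -scaleN1r starZ rmorphN1 scaleN1r. Qed.

Lemma star_sum (I : Type) (r : seq I) (P : pred I) (F : I -> V) :
  star (\sum_(i <- r | P i) F i) = \sum_(i <- r | P i) star (F i).
Proof. exact: (big_morph star starD star0). Qed.

Lemma mx_hermitian0 n : mx_hermitian star (0 : 'M[V]_n).
Proof. by apply/matrixP=> i j; rewrite !mxE star0. Qed.

Lemma mx_hermitianD n (x y : 'M[V]_n) :
  mx_hermitian star x -> mx_hermitian star y -> mx_hermitian star (x + y).
Proof.
by rewrite /mx_hermitian => {2}<- {2}<-; apply/matrixP=> i j; rewrite !mxE starD.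
Qed.

Lemma mx_hermitianN n (x : 'M[V]_n) :
  mx_hermitian star x -> mx_hermitian star (- x).
Proof. by rewrite /mx_hermitian => {2}<-; apply/matrixP=> i j; rewrite !mxE starN. Qed.

Lemma mx_hermitianZ n (t : R) (x : 'M[V]_n) :
  mx_hermitian star x -> mx_hermitian star (mxscale t%:C x).
Proof.
by rewrite /mx_hermitian => {2}<-; apply/matrixP=> i j; rewrite !mxE starZ conjc_real.
Qed.

Lemma mx_hermitian_congr n m (alpha : 'M[C]_(n, m)) (x : 'M[V]_n) :
  mx_hermitian star x -> mx_hermitian star (mx_congr alpha x).
Proof.
rewrite /mx_hermitian => hx; apply/matrixP=> k l; rewrite !mxE star_sum exchange_big.
apply: eq_bigr => i _; rewrite star_sum; apply: eq_bigr => j _.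
by rewrite starZ -{2}hx mxE rmorphM /= conjcK mulrC.
Qed.

End Involution.

Lemma mxscaleDr n a (x y : 'M[V]_n) : mxscale a (x + y) = mxscale a x + mxscale a y.
Proof. by apply/matrixP=> i j; rewrite !mxE scalerDr. Qed.

Lemma mxscaleDl n a b (x : 'M[V]_n) : mxscale (a + b) x = mxscale a x + mxscale b x.
Proof. by apply/matrixP=> i j; rewrite !mxE scalerDl. Qed.

Lemma mxscaleN n a (x : 'M[V]_n) : mxscale a (- x) = - mxscale a x.
Proof. by apply/matrixP=> i j; rewrite !mxE scalerN. Qed.

Lemma mxscaleA n a b (x : 'M[V]_n) : mxscale a (mxscale b x) = mxscale (a * b) x.
Proof. by apply/matrixP=> i j; rewrite !mxE scalerA. Qed.

Lemma mxscale1 n (x : 'M[V]_n) : mxscale 1 x = x.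
Proof. by apply/matrixP=> i j; rewrite !mxE scale1r. Qed.

Lemma mxscale0 n (x : 'M[V]_n) : mxscale 0 x = 0.
Proof. by apply/matrixP=> i j; rewrite !mxE scale0r. Qed.

Lemma amplD n (u v : V) : ampl n (u + v) = ampl n u + ampl n v.
Proof. by apply/matrixP=> i j; rewrite !mxE; case: eqP; rewrite ?addr0. Qed.

Lemma amplB n (u v : V) : ampl n (u - v) = ampl n u - ampl n v.
Proof. by apply/matrixP=> i j; rewrite !mxE; case: eqP; rewrite ?subr0. Qed.

Lemma mx_congrD n m (alpha : 'M[C]_(n, m)) (x y : 'M[V]_n) :
  mx_congr alpha (x + y) = mx_congr alpha x + mx_congr alpha y.
Proof.
apply/matrixP=> k l; rewrite !mxE -big_split; apply: eq_bigr => i _.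
by rewrite -big_split; apply: eq_bigr => j _; rewrite mxE scalerDr.
Qed.

Lemma mx_congrZ n m (alpha : 'M[C]_(n, m)) a (x : 'M[V]_n) :
  mx_congr alpha (mxscale a x) = mxscale a (mx_congr alpha x).
Proof.
apply/matrixP=> k l; rewrite !mxE scaler_sumr; apply: eq_bigr => i _.
by rewrite scaler_sumr; apply: eq_bigr => j _; rewrite mxE !scalerA mulrC.
Qed.

Definition tensmx m (A : 'M[C]_m) (q : V) : 'M[V]_m := \matrix_(k, l) (A k l *: q).

Lemma tensmxBl m (A B : 'M[C]_m) q : tensmx (A - B) q = tensmx A q - tensmx B q.
Proof. by apply/matrixP=> k l; rewrite !mxE scalerBl. Qed.

Lemma tensmxZl m a (A : 'M[C]_m) q : tensmx (a *: A) q = mxscale a (tensmx A q).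
Proof. by apply/matrixP=> k l; rewrite !mxE scalerA. Qed.

Lemma tensmx_suml m (I : Type) (r : seq I) (P : pred I) (F : I -> 'M[C]_m) q :
  tensmx (\sum_(i <- r | P i) F i) q = \sum_(i <- r | P i) tensmx (F i) q.
Proof.
elim/big_rec2: _ => [|i A B _ <-]; apply/matrixP=> k l.
  by rewrite !mxE scale0r.
by rewrite !mxE scalerDl.
Qed.

Lemma tensmx1 m q : tensmx 1%:M q = ampl m q.
Proof. by apply/matrixP=> k l; rewrite !mxE; case: eqP; rewrite ?scale1r ?scale0r. Qed.

Definition gram n m (alpha : 'M[C]_(n, m)) : 'M[C]_m := (map_mx conjc alpha)^T *m alpha.

Lemma gramE n m (alpha : 'M[C]_(n, m)) k l :
  gram alpha k l = \sum_i conjc (alpha i k) * alpha i l.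
Proof. by rewrite !mxE; apply: eq_bigr => i _; rewrite !mxE. Qed.

Lemma mx_congr_ampl n m (alpha : 'M[C]_(n, m)) q :
  mx_congr alpha (ampl n q) = tensmx (gram alpha) q.
Proof.
apply/matrixP=> k l; rewrite [RHS]mxE gramE mxE scaler_suml; apply: eq_bigr => i _.
rewrite (bigD1 i) //= big1 => [|j /negbTE ji]; first by rewrite mxE eqxx addr0.
by rewrite mxE eq_sym ji scaler0.
Qed.

Lemma gram_sum_row n m (alpha : 'M[C]_(n, m)) : gram alpha = \sum_i gram (row i alpha).
Proof.
apply/matrixP=> k l; rewrite gramE summxE; apply: eq_bigr => i _.
by rewrite gramE big_ord1 !mxE.
Qed.

Lemma gram1 n : gram (1%:M : 'M[C]_n) = 1%:M.
Proof. by rewrite /gram map_mx1 trmx1 mul1mx. Qed.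

Lemma gram_delta_diff m (a b : C) (k l : 'I_m) :
  gram (a *: delta_mx 0 k - b *: delta_mx 0 l : 'rV[C]_m)
  = (conjc a * a) *: delta_mx k k - (conjc a * b) *: delta_mx k l
    - (conjc b * a) *: delta_mx l k + (conjc b * b) *: delta_mx l l.
Proof.
rewrite /gram map_mxB !map_mxZ !map_delta_mx [_^T]linearB /= ![_^T]linearZ /= !trmx_delta.
rewrite mulmxBl !mulmxBr -!scalemxAl -!scalemxAr !mul_delta_mx !scalerA.
by rewrite opprD opprK addrA.
Qed.

Lemma gram_rV_lagrange m (g : 'rV[C]_m) :
  \sum_k \sum_l gram (conjc (g 0 l) *: delta_mx 0 k - conjc (g 0 k) *: delta_mx 0 l : 'rV_m)
  = 2%:R *: ((\sum_c g 0 c * conjc (g 0 c)) *: 1%:M - gram g).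
Proof.
set S := \sum_c (g 0 c * _).
have gram_g : gram g = \sum_k \sum_l (g 0 l * conjc (g 0 k)) *: delta_mx k l.
  by rewrite {1}[gram g]matrix_sum_delta; under eq_bigr do under eq_bigr do
    rewrite gramE big_ord1 mulrC.
have diag_sum :
    \sum_(k < m) \sum_(l < m) (g 0 l * conjc (g 0 l)) *: delta_mx k k = S *: (1%:M : 'M[C]_m).
  by rewrite mx1_sum_delta scaler_sumr; under eq_bigr do rewrite -scaler_suml.
under eq_bigr do under eq_bigr do rewrite gram_delta_diff !conjcK.
under eq_bigr do rewrite big_split /= !sumrB.
rewrite big_split /= !sumrB [X in _ - X + _]exchange_big [X in _ + X]exchange_big /=.
by rewrite diag_sum -gram_g scaler_nat mulr2n addrAC -addrA.
Qed.

Section Cones.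
Variable Cn : forall n : nat, 'M[V]_n -> Prop.
Arguments Cn : clear implicits.
Hypothesis ordCn : matrix_ordering star Cn.

Lemma cone_herm n (x : 'M[V]_n) : Cn n x -> mx_hermitian star x.
Proof. by case: (ordCn.1 n) => herm _; apply: herm. Qed.

Lemma cone0 n : Cn n 0.
Proof. by case: (ordCn.1 n) => _ []. Qed.

Lemma coneD n (x y : 'M[V]_n) : Cn n x -> Cn n y -> Cn n (x + y).
Proof. by case: (ordCn.1 n) => _ [_ [add _]]; apply: add. Qed.

Lemma coneZ n (t : R) (x : 'M[V]_n) : 0 <= t -> Cn n x -> Cn n (mxscale t%:C x).
Proof. by case: (ordCn.1 n) => _ [_ [_ scale]]; apply: scale. Qed.

Lemma cone_congr n m (alpha : 'M[C]_(n, m)) (x : 'M[V]_n) :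
  Cn n x -> Cn m (mx_congr alpha x).
Proof. exact: ordCn.2. Qed.

Lemma cone_sum n (I : Type) (r : seq I) (P : pred I) (F : I -> 'M[V]_n) :
  (forall i, P i -> Cn n (F i)) -> Cn n (\sum_(i <- r | P i) F i).
Proof. by apply: big_ind; [exact: cone0 | exact: coneD]. Qed.

Lemma cone_half n (x : 'M[V]_n) : Cn n (mxscale 2%:R x) -> Cn n x.
Proof.
have half : (2^-1 : R)%:C * 2%:R = 1.
  by rewrite -(rmorph_nat (real_complex R)) -rmorphM mulVf ?pnatr_eq0.
move=> /(coneZ (t := 2^-1)); rewrite mxscaleA half mxscale1.
by apply; rewrite invr_ge0 ler0n.
Qed.

Section PositiveElement.
Variable q : V.
Hypothesis q_ge0 : Cn 1 (ampl 1 q).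

Lemma cone_tensmx_gram n m (alpha : 'M[C]_(n, m)) : Cn m (tensmx (gram alpha) q).
Proof.
rewrite gram_sum_row tensmx_suml; apply: cone_sum => i _.
by rewrite -mx_congr_ampl; apply: cone_congr.
Qed.

Lemma cone_ampl n : Cn n (ampl n q).
Proof. by rewrite -tensmx1 -gram1; apply: cone_tensmx_gram. Qed.

Lemma mx_hermitian_ampl n : mx_hermitian star (ampl n q).
Proof. exact: cone_herm (cone_ampl n). Qed.

Lemma cone_tensmx_rV_bound m (g : 'rV[C]_m) :
  Cn m (tensmx ((\sum_c g 0 c * conjc (g 0 c)) *: 1%:M - gram g) q).
Proof.
apply: cone_half; rewrite -tensmxZl -gram_rV_lagrange tensmx_suml.
apply: cone_sum => k _; rewrite tensmx_suml; apply: cone_sum => l _.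
exact: cone_tensmx_gram.
Qed.

Lemma mx_congr_ampl_bound n m (alpha : 'M[C]_(n, m)) :
  exists2 K : R, 0 < K & Cn m (mxscale K%:C (ampl m q) - mx_congr alpha (ampl n q)).
Proof.
pose S := \sum_i \sum_c alpha i c * conjc (alpha i c).
have S_ge0 : 0 <= S by do 2![apply: sumr_ge0 => ? _]; apply: mulcJ_ge0.
have cone_S : Cn m (tensmx (S *: 1%:M - gram alpha) q).
  rewrite gram_sum_row scaler_suml -sumrB tensmx_suml; apply: cone_sum => i _.
  by have := cone_tensmx_rV_bound (row i alpha); under eq_bigr do rewrite !mxE.
exists (complex.Re S + 1); first by rewrite ltr_wpDl // -ler0c RRe_real ?ger0_real.
rewrite rmorphD /= RRe_real ?ger0_real // mxscaleDl mxscale1 addrAC.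
rewrite mx_congr_ampl -tensmx1 -tensmxZl -tensmxBl tensmx1.
by apply: coneD => //; apply: cone_ampl.
Qed.

End PositiveElement.
End Cones.

Section PositivePartOrdering.
Hypothesis star_inv : is_involution star.
Variable Cn : forall n : nat, 'M[V]_n -> Prop.
Arguments Cn : clear implicits.
Hypothesis ordCn : matrix_ordering star Cn.
Variables e p : V.
Hypotheses (p_ge0 : Cn 1 (ampl 1 p)) (e_sub_p_ge0 : Cn 1 (ampl 1 (e - p))).
Local Notation Cp_n := (Cp star Cn e p).

Lemma Cp0 n : Cp_n (0 : 'M[V]_n).
Proof.
split=> [|eps eps_gt0]; first exact: mx_hermitian0.
exists 1; split=> //; rewrite -amplB add0r mxscale1.
apply: (coneD ordCn (coneZ ordCn (ltW eps_gt0) _)); exact: (cone_ampl ordCn).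
Qed.

Lemma CpD n (x y : 'M[V]_n) : Cp_n x -> Cp_n y -> Cp_n (x + y).
Proof.
rewrite /Cp -amplB => -[hx Hx] [hy Hy]; split=> [|eps eps_gt0].
  exact: mx_hermitianD.
have [|t1 [t1_gt0 Cx]] := Hx (eps / 2); first by rewrite divr_gt0.
have [|t2 [t2_gt0 Cy]] := Hy (eps / 2); first by rewrite divr_gt0.
exists (t1 + t2); split; first by rewrite addr_gt0.
rewrite {1}(splitr eps) !rmorphD /= !mxscaleDl.
by have := coneD ordCn Cx Cy; rewrite addrACA (addrACA x).
Qed.

Lemma CpZ n (t : R) (x : 'M[V]_n) : 0 <= t -> Cp_n x -> Cp_n (mxscale t%:C x).
Proof.
rewrite le_eqVlt => /predU1P[<- _|t_gt0]; first by rewrite mxscale0; apply: Cp0.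
rewrite /Cp -amplB => -[hx Hx]; split=> [|eps eps_gt0]; first exact: mx_hermitianZ.
have [|s [s_gt0 Cx]] := Hx (eps / t); first by rewrite divr_gt0.
exists (t * s); split; first by rewrite mulr_gt0.
have := coneZ ordCn (ltW t_gt0) Cx.
by rewrite !mxscaleDr !mxscaleA -!rmorphM mulrCA divff ?mulr1 ?gt_eqF.
Qed.

Lemma Cp_congr n m (alpha : 'M[C]_(n, m)) (x : 'M[V]_n) :
  Cp_n x -> Cp_n (mx_congr alpha x).
Proof.
rewrite /Cp -!amplB => -[hx Hx]; split=> [|eps eps_gt0].
  exact: mx_hermitian_congr.
have [Kp Kp_gt0 Cp_bound] := mx_congr_ampl_bound ordCn p_ge0 alpha.
have [Kq Kq_gt0 Cq_bound] := mx_congr_ampl_bound ordCn e_sub_p_ge0 alpha.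
have [|s [s_gt0 Cx]] := Hx (eps / Kp); first by rewrite divr_gt0.
exists (s * Kq); split; first by rewrite mulr_gt0.
have {}Cp_bound := coneZ ordCn (ltW (divr_gt0 eps_gt0 Kp_gt0)) Cp_bound.
have {}Cq_bound := coneZ ordCn (ltW s_gt0) Cq_bound.
have {}Cx := cone_congr ordCn alpha Cx.
rewrite mxscaleDr mxscaleN mxscaleA -rmorphM /= divfK ?gt_eqF // in Cp_bound.
rewrite mxscaleDr mxscaleN mxscaleA -rmorphM /= in Cq_bound.
rewrite !mx_congrD !mx_congrZ in Cx.
have cancel_errors (u a b c d : 'M[V]_m) : u + a + b + (c - a) + (d - b) = u + c + d.
  by rewrite (addrAC (u + a)) -(addrA u) subrKC -(addrA (u + c)) subrKC.
by have := coneD ordCn (coneD ordCn Cx Cp_bound) Cq_bound; rewrite cancel_errors.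
Qed.

Lemma Cp_matrix_ordering : matrix_ordering star Cp_n.
Proof.
split=> [n|]; last exact: Cp_congr.
by split; [move=> x [] | split; [exact: Cp0 | split; [exact: CpD | exact: CpZ]]].
Qed.

Hypothesis e_unit : archimedean_unit star Cn e.

Lemma Cp_order_unit n (x : 'M[V]_n) :
  mx_hermitian star x -> exists r : R, 0 < r /\ Cp_n (mxscale r%:C (ampl n p) - x).
Proof.
move=> hx; have [r [r_gt0 Cr]] := e_unit.1 n x hx.
exists r; split=> //; split=> [|eps eps_gt0].
  apply: (mx_hermitianD star_inv); last exact: mx_hermitianN.
  by apply: (mx_hermitianZ star_inv); apply: (mx_hermitian_ampl ordCn p_ge0 n).
exists r; split=> //; rewrite -amplB addrAC (addrAC _ (- x)) -mxscaleDr -amplD subrKC.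
by apply: (coneD ordCn Cr); apply: (coneZ ordCn (ltW eps_gt0)); apply: cone_ampl.
Qed.

Lemma Cp_closed n (x : 'M[V]_n) :
  (forall eps : R, 0 < eps -> Cp_n (x + mxscale eps%:C (ampl n p))) -> Cp_n x.
Proof.
move=> Cx; split=> [|eps eps_gt0].
  have [hx1 _] := Cx 1 ltr01; rewrite -(addrK (mxscale 1%:C (ampl n p)) x).
  apply: (mx_hermitianD star_inv hx1); apply: (mx_hermitianN star_inv).
  by apply: (mx_hermitianZ star_inv); apply: (mx_hermitian_ampl ordCn p_ge0 n).
have [|_ Cx2] := Cx (eps / 2); first by rewrite divr_gt0.
have [|t [t_gt0 Ct]] := Cx2 (eps / 2); first by rewrite divr_gt0.
by exists t; split=> //; rewrite {1}(splitr eps) rmorphD /= mxscaleDl addrA.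
Qed.

Lemma Cp_archimedean_unit : archimedean_unit star Cp_n p.
Proof. by split; [exact: Cp_order_unit | exact: Cp_closed]. Qed.

End PositivePartOrdering.
End MatricesOverStarSpace.

Theorem proposition4p7 (R : realType) (V : lmodType R[i]) (star : V -> V)
    (Cn : forall n : nat, 'M[V]_(n) -> Prop) (e p : V) :
  operator_system star Cn e ->
  Cn 1%N (ampl 1 p) -> Cn 1%N (ampl 1 e - ampl 1 p) ->
  matrix_ordering star (Cp star Cn e p) /\ archimedean_unit star (Cp star Cn e p) p.
Proof.
move=> [star_inv [ordCn [_ e_unit]]] p_ge0; rewrite -amplB => e_sub_p_ge0.
split; first exact: Cp_matrix_ordering.
exact: Cp_archimedean_unit.
Qed.
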